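(* Let $G$ be a factor-critical graph. Then $G$ is equimatchable if and only if there is no independent set $I$ with $3$ vertices such that $G\setminus I$ has a perfect matching.
   Context: All graphs are finite and simple. A graph is equimatchable if all its maximal matchings have the same cardinality. A graph $G$ is factor-critical if $G-v$ has a perfect matching for every $v\in V(G)$. For $I\subseteq V(G)$, $G\setminus I$ is the subgraph induced by $V(G)\setminus I$. *)

From mathcomp Require Import all_boot.
Set Implicit Arguments. Unset Strict Implicit. Unset Printing Implicit Defensive.

Definition simple_graph (T : finType) (e : rel T) : Prop :=
  symmetric e /\ irreflexive e.

Definition is_edge (T : finType) (e : rel T) (f : {set T}) : bool :=
  [exists x, exists y, e x y && (f == [set x; y])].

Definition matching (T : finType) (e : rel T) (M : {set {set T}}) : bool :=
  [forall f in M, is_edge e f] && trivIset M.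

Definition matching_in (T : finType) (e : rel T) (S : {set T})
  (M : {set {set T}}) : bool :=
  matching e M && [forall f in M, f \subset S].

Definition perfect_matching_in (T : finType) (e : rel T) (S : {set T})
  (M : {set {set T}}) : bool :=
  matching_in e S M && (cover M == S).

Definition has_perfect_matching_in (T : finType) (e : rel T) (S : {set T}) : Prop :=
  exists M, perfect_matching_in e S M.

Definition maximal_matching (T : finType) (e : rel T) (M : {set {set T}}) : Prop :=
  matching e M /\ forall M', matching e M' -> M \subset M' -> M' = M.

Definition equimatchable (T : finType) (e : rel T) : Prop :=
  forall M1 M2, maximal_matching e M1 -> maximal_matching e M2 -> #|M1| = #|M2|.

Definition factor_critical (T : finType) (e : rel T) : Prop :=
  forall v : T, has_perfect_matching_in e (~: [set v]).

Definition independent (T : finType) (e : rel T) (I : {set T}) : bool :=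
  [forall x in I, forall y in I, ~~ e x y].

From mathcomp Require Import all_boot zify.
Set Implicit Arguments. Unset Strict Implicit. Unset Printing Implicit Defensive.

(* The uncovered vertices of a maximal matching M form an independent set, and
   when G is factor-critical their number has the parity of |V|, hence is odd.
   Fix a perfect matching N of G - u.  While M leaves at least five vertices
   uncovered, take an uncovered w <> u, its N-partner x and the M-edge xy, and
   replace xy by wx: either y now has an uncovered neighbour and M grows by one
   edge, or the uncovered set stays independent and M shares one more edge
   with N.  This ends with a maximal matching leaving exactly three vertices
   uncovered, which is the forbidden triple.  Conversely, a triple gives a
   maximal matching two vertices smaller than a perfect matching of G - v, and
   without triples every maximal matching leaves exactly one vertex uncovered. *)

Section Matchings.

Variables (T : finType) (e : rel T).
Implicit Types (A B : {set T}) (M : {set {set T}}).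

Lemma independentP A :
  reflect {in A &, forall x y, ~~ e x y} (independent e A).
Proof.
apply: (iffP forall_inP) => [indA x y xA | indA x xA].
  exact: (forall_inP (indA x xA)) y.
by apply/forall_inP => y; apply: indA.
Qed.

Lemma independentS A B : A \subset B -> independent e B -> independent e A.
Proof.
move=> /subsetP sAB /independentP indB.
by apply/independentP => x y /sAB xB /sAB; apply: indB.
Qed.

Lemma is_edgeP f : reflect (exists x y, e x y /\ f = [set x; y]) (is_edge e f).
Proof.
apply: (iffP existsP) => [[x /existsP [y /andP [exy /eqP ->]]] | [x [y [exy ->]]]].
  by exists x, y.
by exists x; apply/existsP; exists y; rewrite exy eqxx.
Qed.

Lemma matching_edge M f : matching e M -> f \in M -> exists x y, e x y /\ f = [set x; y].
Proof. by case/andP => /forall_inP edgeM _ /edgeM /is_edgeP. Qed.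

Lemma matching_trivIset M : matching e M -> trivIset M.
Proof. by case/andP. Qed.

Lemma matchingS M M' : M' \subset M -> matching e M -> matching e M'.
Proof.
move=> sM'M /andP [/forall_inP edgeM tiM]; apply/andP; split.
  by apply/forall_inP => f /(subsetP sM'M) /edgeM.
exact: trivIsetS tiM.
Qed.

Lemma cover_setU1 A M : cover (A |: M) = A :|: cover M.
Proof. by rewrite /cover bigcup_setU -/(cover _) cover1. Qed.

Lemma matching_setU1 M x y : matching e M -> e x y ->
  x \notin cover M -> y \notin cover M -> matching e ([set x; y] |: M).
Proof.
move=> mM exy xM yM; have /andP [/forall_inP edgeM tiM] := mM.
apply/andP; split.
  by apply/forall_inP => f /setU1P [->|/edgeM //]; apply/is_edgeP; exists x, y.
have disjM : {in M, forall B, [disjoint [set x; y] & B]}.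
  move=> B BM; apply: disjointWr (bigcup_sup _ BM) _.
  by rewrite disjoints_subset subUset !sub1set !inE xM yM.
have M0 : set0 \notin M.
  by apply/negP => /(matching_edge mM) [a [b [_ /setP /(_ a)]]]; rewrite !inE eqxx.
by case: (trivIsetU1 disjM tiM M0).
Qed.

Lemma card_setU1_uncovered M x y :
  x \notin cover M -> #|[set x; y] |: M| = #|M|.+1.
Proof.
move=> xM; rewrite cardsU1; suff -> : [set x; y] \notin M by [].
by apply: contra xM => xyM; apply/bigcupP; exists [set x; y]; rewrite ?inE ?eqxx.
Qed.

Lemma perfect_matching_inP S M :
  perfect_matching_in e S M <-> matching e M /\ cover M = S.
Proof.
split=> [/andP [/andP [mM _] /eqP //] | [mM <-]].
rewrite /perfect_matching_in /matching_in mM eqxx andbT /=.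
by apply/forall_inP => f; apply: bigcup_sup.
Qed.

Lemma maximal_matchingP M :
  maximal_matching e M <-> matching e M /\ independent e (~: cover M).
Proof.
split=> [[mM maxM] | [mM indM]].
  split=> //; apply/independentP => x y; rewrite !inE => xM yM; apply/negP => exy.
  move: (maxM _ (matching_setU1 mM exy xM yM) (subsetUr _ _)).
  move/setP/(_ [set x; y]); rewrite setU11 => /esym xyM.
  by case/negP: xM; apply/bigcupP; exists [set x; y]; rewrite ?inE ?eqxx.
split=> // M' mM' sMM'; apply/eqP; rewrite eqEsubset sMM' andbT.
apply/subsetP => f fM'; apply: contraT => fNM.
have [x [y [exy fxy]]] := matching_edge mM' fM'.
have uncov z : z \in f -> z \in ~: cover M.
  move=> zf; rewrite inE; apply/bigcupP => -[g gM zg].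
  have tiM' := matching_trivIset mM'.
  have gM' := subsetP sMM' g gM.
  move: fNM; rewrite -(def_pblock tiM' fM' zf) (def_pblock tiM' gM' zg).
  by rewrite gM.
have xf : x \in f by rewrite fxy set21.
have yf : y \in f by rewrite fxy set22.
by have := independentP _ indM x y (uncov x xf) (uncov y yf); rewrite exy.
Qed.

Hypotheses (e_sym : symmetric e) (e_irr : irreflexive e).

Lemma independentU1 A y :
  independent e A -> {in A, forall z, ~~ e y z} -> independent e (y |: A).
Proof.
move=> /independentP indA eyA; apply/independentP => a b.
case/setU1P => [->|aA] /setU1P [->|bA]; first by rewrite e_irr.
- exact: eyA.
- by rewrite e_sym; apply: eyA.
- exact: indA.
Qed.

Lemma matching_edge_at M f w :
  matching e M -> f \in M -> w \in f -> exists x, e w x /\ f = [set w; x].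
Proof.
move=> mM fM; have [a [b [eab ->]]] := matching_edge mM fM.
case/set2P => ->; first by exists b.
by exists a; rewrite e_sym setUC.
Qed.

Lemma card_cover_matching M : matching e M -> #|cover M| = #|M| * 2.
Proof.
move=> mM; apply: card_uniform_partition; last first.
  rewrite /partition eqxx matching_trivIset //=.
  by apply/negP => /(matching_edge mM) [a [b [_ /setP /(_ a)]]]; rewrite !inE eqxx.
move=> f /(matching_edge mM) [x [y [exy ->]]]; rewrite cards2.
by case: eqP exy => // ->; rewrite e_irr.
Qed.

Lemma card_uncovered M : matching e M -> #|~: cover M| + #|M| * 2 = #|T|.
Proof. by move=> mM; rewrite -card_cover_matching // addnC cardsC. Qed.

End Matchings.

Section Exchange.

Variables (T : finType) (e : rel T) (M : {set {set T}}) (w x y : T).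
Hypotheses (maxM : maximal_matching e M) (xyM : [set x; y] \in M) (x_neq_y : x != y).
Hypotheses (wM : w \notin cover M) (ewx : e w x).
Hypotheses (e_sym : symmetric e) (e_irr : irreflexive e).

Let M1 := [set w; x] |: (M :\ [set x; y]).

Let matchingM : matching e M. Proof. by case/maximal_matchingP: maxM. Qed.

Let indM : independent e (~: cover M). Proof. by case/maximal_matchingP: maxM. Qed.

Let tiM : trivIset M. Proof. exact: matching_trivIset matchingM. Qed.

Let xM : x \in cover M. Proof. by apply/bigcupP; exists [set x; y]; rewrite ?set21. Qed.

Let yM : y \in cover M. Proof. by apply/bigcupP; exists [set x; y]; rewrite ?set22. Qed.

Let wMD : w \notin cover (M :\ [set x; y]).
Proof. by rewrite coverD1 // inE (negbTE wM) andbF. Qed.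

Lemma cover_exchange :
  cover M1 = [set w; x] :|: (cover M :\: [set x; y]).
Proof. by rewrite cover_setU1 coverD1. Qed.

Lemma matching_exchange : matching e M1.
Proof.
apply: matching_setU1 ewx wMD _; first exact: matchingS (subsetDl M _) matchingM.
by rewrite coverD1 // !inE eqxx.
Qed.

Lemma card_exchange : #|M1| = #|M|.
Proof. by rewrite card_setU1_uncovered // (cardsD1 [set x; y] M) xyM. Qed.

Lemma exchange_augment z : z \notin cover M -> z != w -> e y z ->
  maximal_matching e ([set y; z] |: M1) /\ #|[set y; z] |: M1| = #|M|.+1.
Proof.
move=> zM z_neq_w eyz.
have yM1 : y \notin cover M1.
  rewrite cover_exchange !inE eqxx orbT /= orbF negb_or (eq_sym y x) x_neq_y andbT.
  by apply: contraNneq wM => <-.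
have zM1 : z \notin cover M1.
  rewrite cover_exchange !inE (negbTE z_neq_w) (negbTE zM) andbF orbF /=.
  by apply: contraNneq zM => ->.
split; last by rewrite card_setU1_uncovered // card_exchange.
apply/maximal_matchingP; split; first exact: matching_setU1 matching_exchange eyz yM1 zM1.
apply: independentS indM.
rewrite setCS cover_setU1 cover_exchange; apply/subsetP => v vM; rewrite !inE vM.
by case: (v == x); case: (v == y); rewrite ?orbT.
Qed.

Lemma exchange_swap :
  {in ~: cover M, forall z, z != w -> ~~ e y z} -> maximal_matching e M1.
Proof.
move=> noz; apply/maximal_matchingP; split; first exact: matching_exchange.
apply: (@independentS _ _ _ (y |: (~: cover M :\ w))).
  apply/subsetP => v; rewrite cover_exchange !inE !negb_or.
  by case: (v == w); case: (v == x); case: (v == y); case: (v \in cover M).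
apply: independentU1 => //; first exact: independentS (subsetDl _ _) indM.
by move=> z /setD1P [z_neq_w zM]; apply: noz.
Qed.

End Exchange.

Lemma card_setU1D1_setD (aT : finType) (A B : {set aT}) a b :
  b \in B -> a \in A -> a \notin B -> #|(b |: (A :\ a)) :\: B| < #|A :\: B|.
Proof.
move=> bB aA aNB; apply: proper_card; apply/properP; split.
  apply/subsetP => h; rewrite !inE => /andP [hNB /orP [/eqP hb|/andP [_ hA]]].
    by rewrite hb bB in hNB.
  by rewrite hNB hA.
exists a; first by rewrite !inE aNB.
have a_neq_b : a != b by apply: contraNneq aNB => ->.
by rewrite !inE eqxx (negbTE a_neq_b) /= andbF.
Qed.

Definition triple_obstruction (T : finType) (e : rel T) : Prop :=
  exists I : {set T}, [/\ independent e I, #|I| = 3 & has_perfect_matching_in e (~: I)].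

Section FactorCritical.

Variables (T : finType) (e : rel T) (u : T) (N : {set {set T}}).
Hypotheses (e_sym : symmetric e) (e_irr : irreflexive e).
Hypotheses (matchingN : matching e N) (coverN : cover N = ~: [set u]).

Lemma odd_card_uncovered M : matching e M -> odd #|~: cover M|.
Proof.
move=> mM; have := card_uncovered e_irr mM.
rewrite -(card_uncovered e_irr matchingN) coverN setCK cards1 => /(congr1 odd).
by rewrite !oddD !oddM /= !andbF !addbF.
Qed.

Lemma exchange_step M : maximal_matching e M -> 2 <= #|~: cover M| ->
  exists2 M', maximal_matching e M' &
    #|M'| = #|M|.+1 \/ #|M'| = #|M| /\ #|M' :\: N| < #|M :\: N|.
Proof.
move=> maxM U2; have /maximal_matchingP [mM /independentP indM] := maxM.
have [w] : exists w, w \in ~: cover M :\ u.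
  by apply/card_gt0P; move: U2; rewrite (cardsD1 u); case: (u \in _) => /=; lia.
rewrite !inE => /andP [w_neq_u wM].
have [g gN wg] : exists2 g, g \in N & w \in g.
  by apply/bigcupP; rewrite -/(cover N) coverN !inE.
have [x [ewx gwx]] := matching_edge_at e_sym matchingN gN wg.
have [f fM xf] : exists2 f, f \in M & x \in f.
  apply/bigcupP; apply: contraT => xM.
  by have := indM w x; rewrite !inE ewx; apply.
have [y [exy fxy]] := matching_edge_at e_sym mM fM xf.
have x_neq_y : x != y by apply: contraTneq exy => ->; rewrite e_irr.
rewrite {}fxy in fM xf.
have [/existsP [z /and3P [zM z_neq_w eyz]] | noz] :=
  boolP [exists z, [&& z \notin cover M, z != w & e y z]].
  have [maxM' cardM'] := exchange_augment maxM fM x_neq_y wM ewx zM z_neq_w eyz.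
  by exists ([set y; z] |: ([set w; x] |: (M :\ [set x; y]))); last left.
have noz' : {in ~: cover M, forall z, z != w -> ~~ e y z}.
  move=> z; rewrite inE => zM z_neq_w; apply: contraNN noz => eyz.
  by apply/existsP; exists z; rewrite zM z_neq_w.
exists ([set w; x] |: (M :\ [set x; y])); first exact: exchange_swap.
right; split; first exact: card_exchange maxM fM wM.
rewrite -gwx; apply: (card_setU1D1_setD gN fM).
apply: contra wM => xyN; apply/bigcupP; exists [set x; y] => //.
have tiN := matching_trivIset matchingN; have xg : x \in g by rewrite gwx set22.
by rewrite -(def_pblock tiN xyN xf) (def_pblock tiN gN xg).
Qed.

Lemma triple_of_maximal_matching M :
  maximal_matching e M -> 3 <= #|~: cover M| -> triple_obstruction e.
Proof.
move Ek: (#|T| - #|M|) => k; elim/ltn_ind: k M Ek => k IHk M Ek.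
move Ej: #|M :\: N| => j; elim/ltn_ind: j M Ek Ej => j IHj M Ek Ej maxM U3.
have /maximal_matchingP [mM indM] := maxM; have cardM := card_uncovered e_irr mM.
have [U_eq3|U_neq3] := eqVneq #|~: cover M| 3.
  exists (~: cover M); split=> //.
  by exists M; apply/perfect_matching_inP; rewrite setCK.
have U5 : 5 <= #|~: cover M|.
  have : odd #|~: cover M| := odd_card_uncovered mM.
  by move: U3 U_neq3; case: #|_| => [|[|[|[|[|n]]]]].
have [M' maxM' grow_or_shrink] := exchange_step maxM (ltnW U3).
have /maximal_matchingP [mM' _] := maxM'; have cardM' := card_uncovered e_irr mM'.
case: grow_or_shrink => [growM'|[sameM' shrinkM']].
  by apply: (IHk (#|T| - #|M'|)) maxM' _; lia.
by apply: (IHj #|M' :\: N|) maxM' _; lia.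
Qed.

Lemma card_maximal_matching M :
  ~ triple_obstruction e -> maximal_matching e M -> #|M| = #|N|.
Proof.
move=> noI maxM; have /maximal_matchingP [mM _] := maxM.
have U1 : #|~: cover M| = 1.
  have : #|~: cover M| < 3 by rewrite ltnNge; apply/negP => /(triple_of_maximal_matching maxM).
  by have := odd_card_uncovered mM; case: #|_| => [|[|[]]].
have := card_uncovered e_irr mM; have := card_uncovered e_irr matchingN.
rewrite coverN setCK cards1 U1; lia.
Qed.

End FactorCritical.

Theorem lemma3p1 (T : finType) (e : rel T) :
  simple_graph e -> factor_critical e ->
  (equimatchable e <->
   ~ (exists I : {set T},
        [/\ independent e I, #|I| = 3 & has_perfect_matching_in e (~: I)])).
Proof.
move=> [e_sym e_irr] fc; split=> [equi [I [indI cardI [M]]] | noI M1 M2 maxM1 maxM2].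
  move=> /perfect_matching_inP [mM coverM].
  have [v vI] : exists v, v \in I by apply/card_gt0P; rewrite cardI.
  have [N /perfect_matching_inP [mN coverN]] := fc v.
  have maxM : maximal_matching e M by apply/maximal_matchingP; rewrite coverM setCK.
  have maxN : maximal_matching e N.
    apply/maximal_matchingP; split=> //; rewrite coverN setCK.
    by apply/independentP => a b /set1P -> /set1P ->; rewrite e_irr.
  have := card_uncovered e_irr mM; have := card_uncovered e_irr mN.
  rewrite coverM coverN !setCK cards1 cardI (equi _ _ maxM maxN); lia.
have /maximal_matchingP [mM1 _] := maxM1; have /maximal_matchingP [mM2 _] := maxM2.
have [T0|/card_gt0P [u _]] := posnP #|T|.
  have := card_uncovered e_irr mM1; have := card_uncovered e_irr mM2; lia.
have [N /perfect_matching_inP [mN coverN]] := fc u.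
by rewrite (card_maximal_matching e_sym e_irr mN coverN noI maxM1)
  (card_maximal_matching e_sym e_irr mN coverN noI maxM2).
Qed.
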